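(* Let $d:\Sigma^n\to\Sigma$ be a depth assignment and let $s_0,\dots,s_m$ be a path in the valid subgraph of $B_n$ (i.e. each $(s_i,s_{i+1})$ is a valid arc). Then \[\sum_{i=0}^{m-1} e_{s_i[0]} \equiv P\left(H(s_0)+e_{d_{s_0}}\right) - P\left(H(s_m)+e_{d_{s_m}}\right) \mod K.\]
   Context: Let $k\ge 1$ be an integer, $\Sigma=\{0,1,\dots,k-1\}$ with arithmetic on symbols taken modulo $k$, and $n\ge 1$. For $s\in\Sigma^n$ write $s=s[0]\cdots s[n-1]$. The de Bruijn graph $B_n$ has node set $\Sigma^n$ and an arc $(s,t)$ iff $s[1]\cdots s[n-1]=t[0]\cdots t[n-2]$. A depth assignment is any function $d:\Sigma^n\to\Sigma$, written $s\mapsto d_s$. An arc $(s,t)$ of $B_n$ is valid (with respect to $d$) if, with $b=s[0]$ and $c=t[n-1]$, either ($b+1=c$ and $d_s=d_t$) or ($b+1=d_t$ and $c=d_s$); the valid arcs form the valid subgraph. The histogram $H(s):\Sigma\to\mathbb{Z}$ counts occurrences of each symbol in $s$; $e_b$ is the indicator function of $b\in\Sigma$; $K$ is the constant function $1$ on $\Sigma$; $P(H)(i)=\sum_{j=0}^i H(j)$ is the partial sum of $H:\Sigma\to\mathbb{Z}$; $F\equiv G\mod K$ means $F-G$ is an integer multiple of $K$. *)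

From mathcomp Require Import all_boot all_order all_algebra.
Set Implicit Arguments. Unset Strict Implicit. Unset Printing Implicit Defensive.
Import GRing.Theory Num.Theory.
Local Open Scope ring_scope.

(* Alphabet Sigma = 'I_k (symbols 0..k-1), arithmetic mod k.
   Strings s in Sigma^n are n-tuples of 'I_k. *)
Definition word (k n : nat) := (n.-tuple 'I_k)%type.

Definition sym (k n : nat) (s : word k n) (i : nat) : nat := nth 0%N (map val s) i.

Definition dB_arc (k n : nat) (s t : word k n) : Prop :=
  forall i : nat, (i < n.-1)%N -> sym s i.+1 = sym t i.

Definition succ_mod (k b : nat) : nat := (b.+1 %% k)%N.

Definition valid_arc (k n : nat) (d : word k n -> 'I_k) (s t : word k n) : Prop :=
  dB_arc s t /\
  (let b := sym s 0 in let c := sym t n.-1 in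
   (succ_mod k b = c /\ d s = d t) \/
   (succ_mod k b = val (d t) /\ c = val (d s))).

Definition hist (k n : nat) (s : word k n) : 'I_k -> int :=
  fun j => (count (pred1 j) s)%:Z.

Definition ind (k : nat) (b : nat) : 'I_k -> int := fun j => ((val j == b) : nat)%:Z.

Definition psum (k : nat) (H : 'I_k -> int) : 'I_k -> int :=
  fun i => \sum_(j < k | (j <= i)%N) H j.

(* F == G mod K : F - G is an integer multiple of the constant function 1 *)
Definition eqmodK (k : nat) (F G : 'I_k -> int) : Prop :=
  exists c : int, forall i : 'I_k, F i - G i = c.

From mathcomp Require Import all_boot all_order all_algebra zify.
Import GRing.Theory Num.Theory.
Local Open Scope ring_scope.
Set Implicit Arguments. Unset Strict Implicit.

(* Along a valid arc (s, t) with b = s[0], the histogram loses b and gains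
   t[n-1], while the depth moves from d_s to d_t; in both kinds of valid arc
   the net effect on H + e_d is to replace e_b by e_(b+1).  Taking partial
   sums, P(e_b) - P(e_(b+1)) differs from e_b by the constant 0 (if b + 1 < k)
   or 1 (if b + 1 wraps around to 0), so each arc contributes e_b modulo K and
   the differences telescope along the path. *)

Section EqModK.

Variable k : nat.
Implicit Types F G : 'I_k -> int.

Lemma eqmodK_refl F : eqmodK F F.
Proof. by exists 0 => i; rewrite subrr. Qed.

Lemma eqmodK_add F1 G1 F2 G2 :
  eqmodK F1 G1 -> eqmodK F2 G2 ->
  eqmodK (fun i => F1 i + F2 i) (fun i => G1 i + G2 i).
Proof.
move=> [c1 h1] [c2 h2]; exists (c1 + c2) => i.
by rewrite -(h1 i) -(h2 i) opprD addrACA.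
Qed.

Lemma eq_eqmodK F G F' G' :
  F =1 F' -> G =1 G' -> eqmodK F G -> eqmodK F' G'.
Proof. by move=> eF eG [c h]; exists c => i; rewrite -eF -eG h. Qed.

End EqModK.

Section PartialSums.

Variable k : nat.

Lemma psumD (F G : 'I_k -> int) i :
  psum (fun l => F l + G l) i = psum F i + psum G i.
Proof. exact: big_split. Qed.

Lemma psumB (F G : 'I_k -> int) i :
  psum (fun l => F l - G l) i = psum F i - psum G i.
Proof. exact: sumrB. Qed.

Lemma psum_ind (b : nat) (i : 'I_k) : (b < k)%N -> psum (ind b) i = (b <= i)%N%:Z.
Proof.
move=> lt_bk; rewrite /psum /ind big_mkcond (bigD1 (Ordinal lt_bk)) //= eqxx.
rewrite big1 ?addr0 => [|j ne_jb]; first by case: ifP.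
by case: ifP => // _; case: eqP => // eq_jb; case/eqP: ne_jb; apply: val_inj.
Qed.

Lemma ind_eqmodK_psum_succ (b : nat) : (b < k)%N ->
  eqmodK (@ind k b) (fun j : 'I_k => psum (ind b) j - psum (ind (succ_mod k b)) j).
Proof.
move=> lt_bk; rewrite /succ_mod.
have [lt_b1k | eq_b1k] : (b.+1 < k)%N \/ b.+1 = k by lia.
  exists 0 => j; rewrite modn_small // !psum_ind // /ind.
  by case: (ltngtP (val j) b).
have k_gt0 : (0 < k)%N by rewrite -eq_b1k.
exists 1 => j; rewrite eq_b1k modnn !psum_ind // /ind.
have le_jb : (j <= b)%N by rewrite -ltnS eq_b1k.
by case: (ltngtP (val j) b) le_jb; rewrite ?leq0n.
Qed.

End PartialSums.

Section ShiftedSeq.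

Variables (T : eqType) (x0 : T) (n : nat) (u v : seq T).
Hypotheses (size_u : size u = n) (size_v : size v = n).
Hypothesis shift_uv : forall i, (i < n.-1)%N -> nth x0 u i.+1 = nth x0 v i.

Lemma behead_shift : behead u = take n.-1 v.
Proof.
apply: (@eq_from_nth _ x0) => [|i].
  by rewrite size_behead size_u size_takel ?size_v ?leq_pred.
rewrite size_behead size_u => lt_i; rewrite nth_behead nth_take //; exact: shift_uv.
Qed.

Lemma count_shift (a : pred T) : (0 < n)%N ->
  (count a u + a (nth x0 v n.-1) = count a v + a (nth x0 u 0))%N.
Proof.
move=> n_gt0.
have {1}-> : u = nth x0 u 0 :: behead u by case: u size_u n_gt0 => [<-|].
have {2}-> : v = take n.-1 v ++ [:: nth x0 v n.-1].
  rewrite -[in LHS](cat_take_drop n.-1 v) (drop_nth x0) ?drop_oversize //;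
  by rewrite size_v ?prednK ?leq_pred.
by rewrite behead_shift count_cat /= addn0; lia.
Qed.

End ShiftedSeq.

Section ValidArcs.

Variables (k n : nat) (d : word k n -> 'I_k).
Hypotheses (k_gt0 : (0 < k)%N) (n_gt0 : (0 < n)%N).

Definition weight (s : word k n) (l : 'I_k) : int := hist s l + ind (val (d s)) l.

Lemma sym_lt (s : word k n) i : (sym s i < k)%N.
Proof.
rewrite /sym; case: (ltnP i (size (map val s))) => [lt_i|ge_i]; last by rewrite nth_default.
by rewrite (nth_map (Ordinal k_gt0)) ?ltn_ord // -(size_map val).
Qed.

Lemma hist_dB_arc (s t : word k n) : dB_arc s t ->
  forall j, hist t j = hist s j - ind (sym s 0) j + ind (sym t n.-1) j.
Proof.
move=> arc j.
have count_val (w : word k n) :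
    count (pred1 j) w = count (pred1 (val j)) (map val w).
  by rewrite count_map; apply: eq_count => x; rewrite /= -val_eqE.
have := count_shift (x0 := 0%N) (eqP (map_tupleP val s))
                    (eqP (map_tupleP val t)) arc (pred1 (val j)) n_gt0.
rewrite /hist /ind /sym !count_val /= !(eq_sym (nat_of_ord j)); lia.
Qed.

Lemma weight_valid_arc (s t : word k n) : valid_arc d s t ->
  forall l, weight t l = weight s l - ind (sym s 0) l + ind (succ_mod k (sym s 0)) l.
Proof.
move=> [arc valid] l; rewrite /weight (hist_dB_arc arc).
by case: valid => [[-> ->] | [-> ->]]; rewrite /ind; lia.
Qed.

Lemma valid_arc_eqmodK (s t : word k n) : valid_arc d s t ->
  eqmodK (ind (sym s 0)) (fun j => psum (weight s) j - psum (weight t) j).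
Proof.
move=> arc; apply: eq_eqmodK (ind_eqmodK_psum_succ (sym_lt s 0)) => // j.
set b := sym s 0.
have -> : psum (weight t) j =
          psum (weight s) j - psum (ind b) j + psum (ind (succ_mod k b)) j.
  by rewrite -psumB -psumD; apply: eq_bigr => l _; apply: weight_valid_arc.
lia.
Qed.

End ValidArcs.

Unset Implicit Arguments.

Theorem lemma4 (k n : nat) (hk : (0 < k)%N) (hn : (0 < n)%N)
  (d : word k n -> 'I_k) (m : nat) (s : nat -> word k n)
  (hpath : forall i : nat, (i < m)%N -> valid_arc d (s i) (s i.+1)) :
  eqmodK (fun j : 'I_k => \sum_(i < m) @ind k (sym (s i) 0) j)
         (fun j : 'I_k =>
            psum (fun l => hist (s 0%N) l + @ind k (val (d (s 0%N))) l) j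
          - psum (fun l => hist (s m) l + @ind k (val (d (s m))) l) j).
Proof.
elim: m hpath => [|m IH] hpath.
  by apply: eq_eqmodK (eqmodK_refl (fun _ => 0)) => j; rewrite ?big_ord0 ?subrr.
have IHm := IH (fun i lt_im => hpath i (ltnW lt_im)).
have last_arc := valid_arc_eqmodK hk hn (hpath m (ltnSn m)).
apply: eq_eqmodK (eqmodK_add IHm last_arc) => j /=; first by rewrite big_ord_recr.
by rewrite addrA subrK.
Qed.
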